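(* Fix $p\in(0,1]$ and $\lambda\in\mathbb{R}$. For any fixed $T>0$ and $a\in(0,\frac{p}{1+p})$ there exist $b_{T,a}>0$ and $C_{T,a}>0$ such that for all $b\ge b_{T,a}$ and all $t\in(-\infty,T+ap\log b]$, $$|\Psi_b(t-p\log b)-\Theta_h(t)|\le C_{T,a}\,b^{-2p(1-a)}e^{t/p},$$ and the same bound holds for the $t$-derivatives, i.e. $|\Psi_b'(t-p\log b)-\Theta_h'(t)|\le C_{T,a}b^{-2p(1-a)}e^{t/p}$ on the same interval.
   Context: Let $d=2+\frac2p$. For $b>0$ let $f$ be the unique classical solution of $f''(r)+\frac{d-1}{r}f'(r)-r^2f(r)+\lambda f(r)+|f(r)|^{2p}f(r)=0$ for $r>0$ with $f(0)=b$, $f'(0)=0$. Set $\Psi_b(t)=e^{t/p}f(e^t)$ (Emden--Fowler transformation), which solves $\Psi''-\frac{1}{p^2}\Psi+|\Psi|^{2p}\Psi=-\lambda e^{2t}\Psi+e^{4t}\Psi$ and satisfies $\Psi_b(t)=be^{t/p}\left[1-\frac{p(\lambda+b^{2p})}{4(p+1)}e^{2t}+O(e^{4t})\right]$ as $t\to-\infty$. Let $\Theta_h(t)=\dfrac{e^{t/p}}{(1+\alpha_pe^{2t})^{1/p}}$ with $\alpha_p=\frac{p^2}{4(1+p)}$, the positive homoclinic solution of $\Theta''-\frac1{p^2}\Theta+|\Theta|^{2p}\Theta=0$. *)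

From Stdlib Require Import Reals.
From Coquelicot Require Import Coquelicot.
Open Scope R_scope.

(* x^y for x >= 0, y > 0, with the convention 0^y = 0 (Rpower 0 y = 1 in Stdlib). *)
Definition rpow0 (x y : R) : R := if Rle_dec x 0 then 0 else Rpower x y.

Definition dim (p : R) : R := 2 + 2 / p.

(* f is a classical (radial) solution on r > 0 of
   f'' + (d-1)/r f' - r^2 f + lambda f + |f|^{2p} f = 0,
   with f(0) = b and f'(0) = 0 (right derivative at 0). *)
Definition is_classical_sol (p lam b : R) (f : R -> R) : Prop :=
  (forall r, 0 < r ->
     ex_derive f r /\ ex_derive (Derive f) r /\
     Derive_n f 2 r + (dim p - 1) / r * Derive f r - r ^ 2 * f r
       + lam * f r + rpow0 (Rabs (f r)) (2 * p) * f r = 0) /\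
  f 0 = b /\
  filterlim (fun h => (f h - f 0) / h) (at_right 0) (locally 0).

Definition Psi (p : R) (f : R -> R) (t : R) : R := exp (t / p) * f (exp t).

Definition alpha (p : R) : R := p ^ 2 / (4 * (1 + p)).

Definition Theta_h (p : R) (t : R) : R :=
  exp (t / p) / Rpower (1 + alpha p * exp (2 * t)) (1 / p).

From Stdlib Require Import Reals Lra.
From Coquelicot Require Import Coquelicot.
Open Scope R_scope.

(* Put [L = ln b], [eps = b^(-2p)] and rescale the solution as
   [G(s) = f(b^(-p) e^s) / b], so that [Psi_b(t - p L) = e^(t/p) G(t)] and
   [Theta_h(t) = e^(t/p) q(t)] with [q(s) = (1 + alpha e^(2s))^(-1/p)].
   [G] solves [(e^(2s/p) G')' = e^((2/p+2)s) (eps^2 e^(2s) G - eps lam G - G^(2p+1))]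
   with [G -> 1] and [e^(2s/p) G' -> 0] at [-oo], while [q] solves the same
   equation with [eps = 0].  The difference [u = G - q] is trapped, by a
   continuous-induction argument, inside an explicit barrier
   [Y(s) = exp(-k/(1 + alpha e^s)) (A + B e^(2s))], whose flux dominates the
   linearised forcing of [u] (supersolution property), as long as [Y] stays
   below [q]; with [A = b^(-2p(1-a))] this holds up to [s = T + a p L] once
   [b] is large, precisely because [a < p/(1+p)]. *)

(** * Elementary real analysis *)

Lemma exp_le_mono x y : x <= y -> exp x <= exp y.
Proof. intros [H|H]; [left; apply exp_increasing; auto| subst; lra]. Qed.

Lemma exp_le1 x : x <= 0 -> exp x <= 1.
Proof. intros. rewrite <- exp_0. apply exp_le_mono; auto. Qed.

Lemma exp_ge1 x : 0 <= x -> 1 <= exp x.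
Proof. intros. rewrite <- exp_0. apply exp_le_mono; auto. Qed.

Lemma exp_double s : exp (2 * s) = exp s ^ 2.
Proof. replace (2 * s) with (s + s) by ring. rewrite exp_plus. ring. Qed.

Lemma ln_1_plus_le x : 0 <= x -> ln (1 + x) <= x.
Proof.
  intros Hx. rewrite <- (ln_exp x) at 2. apply ln_le. lra. apply exp_ineq1_le.
Qed.

Lemma exp_double_small c : 0 < c -> exists s1, s1 <= 0 /\ forall s, s <= s1 -> exp (2 * s) <= c.
Proof.
  intros Hc. exists (Rmin 0 (ln c / 2)). split. apply Rmin_l.
  intros s Hs. pose proof (Rmin_r 0 (ln c / 2)).
  rewrite <- (exp_ln c) by auto. apply exp_le_mono. lra.
Qed.

Lemma is_derive_continuous_eps f x l : is_derive f x l ->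
  forall e, 0 < e -> exists d, 0 < d /\ forall y, Rabs (y - x) < d -> Rabs (f y - f x) < e.
Proof.
  intros Hd e He. apply is_derive_Reals in Hd.
  assert (Hc : continuity_pt f x) by (apply derivable_continuous_pt; exists l; auto).
  destruct (Hc e He) as [d [Hd1 Hd2]]. exists d. split; auto.
  intros y Hy. destruct (Req_dec y x) as [->|Hne].
  - unfold Rminus. rewrite Rplus_opp_r, Rabs_R0. auto.
  - apply (Hd2 y). split. split. exact I. auto. simpl. unfold R_dist. auto.
Qed.

Lemma nondecreasing_of_deriv (h dh : R -> R) x y : x <= y ->
  (forall s, x <= s <= y -> is_derive h s (dh s)) ->
  (forall s, x < s < y -> 0 <= dh s) -> h x <= h y.
Proof.
  intros [Hxy|Hxy] Hd Hpos; [|subst; lra].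
  destruct (MVT_cor2 h dh x y Hxy) as [c [Hc1 Hc2]].
  { intros c Hc. apply is_derive_Reals. apply Hd; auto. }
  assert (0 <= dh c) by (apply Hpos; auto).
  assert (0 <= dh c * (y - x)) by (apply Rmult_le_pos; lra). lra.
Qed.

Lemma increment_comparison (h dh g dg : R -> R) x y : x <= y ->
  (forall s, x <= s <= y -> is_derive h s (dh s)) ->
  (forall s, x <= s <= y -> is_derive g s (dg s)) ->
  (forall s, x < s < y -> Rabs (dh s) <= dg s) ->
  Rabs (h y - h x) <= g y - g x.
Proof.
  intros Hxy Hh Hg Hd.
  assert (Hside : forall sg, sg = 1 \/ sg = -1 -> g x - sg * h x <= g y - sg * h y).
  { intros sg Hsg.
    apply (nondecreasing_of_deriv (fun t => g t - sg * h t) (fun t => dg t - sg * dh t)); auto.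
    - intros s Hs. apply (is_derive_minus g (fun t => sg * h t)); auto.
      apply (is_derive_scal h s sg); auto.
    - intros s Hs. specialize (Hd s Hs). apply Rabs_le_between in Hd.
      destruct Hsg as [-> | ->]; lra. }
  pose proof (Hside 1 (or_introl eq_refl)). pose proof (Hside (-1) (or_intror eq_refl)).
  apply Rabs_le. lra.
Qed.

Lemma continuous_induction (P : R -> Prop) (smax : R) :
  (exists s1, forall s, s < s1 -> P s) ->
  (forall x, x <= smax -> (forall s, s < x -> P s) -> P x) ->
  (forall x, x < smax -> P x -> exists d, 0 < d /\ forall s, x <= s < x + d -> P s) ->
  forall s, s <= smax -> P s.
Proof.
  intros [s1 Hs1] Hb Hc.
  set (E := fun y => y <= smax /\ forall s, s < y -> P s).
  assert (HE : exists y, E y).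
  { exists (Rmin s1 smax). split. apply Rmin_r. intros s Hs. apply Hs1.
    pose proof (Rmin_l s1 smax). lra. }
  assert (Hbd : bound E) by (exists smax; intros y [Hy _]; auto).
  destruct (completeness E Hbd HE) as [m [Hub Hlub]].
  assert (Hbelow : forall s, s < m -> P s).
  { intros s Hs. destruct (Classical_Prop.classic (P s)) as [Hp|Hnp]; auto.
    exfalso. assert (Hup : is_upper_bound E s).
    { intros y [Hy1 Hy2]. destruct (Rle_lt_dec y s); auto.
      exfalso. apply Hnp. apply Hy2. auto. }
    specialize (Hlub s Hup). lra. }
  assert (Hm : m <= smax) by (apply Hlub; intros y [Hy _]; auto).
  assert (Pm : P m) by (apply Hb; auto).
  destruct (Req_dec m smax) as [Heq|Hne].
  - intros s Hs. destruct (Rle_lt_or_eq_dec s smax Hs) as [Hl|He].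
    + apply Hbelow; lra.
    + subst; auto.
  - exfalso. destruct (Hc m ltac:(lra) Pm) as [d [Hd HP]].
    set (y := Rmin (m + d/2) smax).
    assert (Ey : E y).
    { split. apply Rmin_r. intros s Hs.
      destruct (Rlt_le_dec s m). apply Hbelow; auto.
      apply HP. split; auto. unfold y in Hs. pose proof (Rmin_l (m+d/2) smax). lra. }
    specialize (Hub y Ey). unfold y in Hub.
    unfold Rmin in Hub; destruct (Rle_dec (m + d/2) smax); lra.
Qed.

(** * The power nonlinearity *)

Definition nonlin (p x : R) : R := rpow0 (Rabs x) (2 * p) * x.

Lemma nonlin_pos p x : 0 < x -> nonlin p x = exp ((2 * p + 1) * ln x).
Proof.
  intros Hx. unfold nonlin, rpow0. rewrite Rabs_pos_eq by lra.
  destruct (Rle_dec x 0). lra. unfold Rpower.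
  replace ((2*p+1) * ln x) with (2*p*ln x + ln x) by ring. rewrite exp_plus, exp_ln; auto.
Qed.

(* Homogeneity: [N(b y) = b^(2p+1) N(y)]; it drives the rescaling [f = b G]. *)
Lemma nonlin_scale p b y : 0 < b ->
  nonlin p (b * y) = exp (2 * p * ln b) * b * nonlin p y.
Proof.
  intros Hb. unfold nonlin. destruct (Req_dec y 0) as [->|Hy].
  - rewrite !Rmult_0_r. ring.
  - unfold rpow0. rewrite Rabs_mult, (Rabs_pos_eq b) by lra.
    assert (0 < Rabs y) by (apply Rabs_pos_lt; auto).
    destruct (Rle_dec (b * Rabs y) 0). nra. destruct (Rle_dec (Rabs y) 0). lra.
    unfold Rpower. rewrite ln_mult by lra. rewrite Rmult_plus_distr_l, exp_plus. ring.
Qed.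

Lemma nonlin_bound p x : 0 < p <= 1 -> 1/2 <= x <= 3/2 -> Rabs (nonlin p x) <= 8.
Proof.
  intros Hp Hx. rewrite nonlin_pos by lra. rewrite Rabs_pos_eq by (left; apply exp_pos).
  assert (Hl2 : 0 < ln 2) by (rewrite <- ln_1; apply ln_increasing; lra).
  assert (ln x <= ln 2) by (apply ln_le; lra).
  apply Rle_trans with (exp (3 * ln 2)).
  - apply exp_le_mono. destruct (Rle_lt_dec (ln x) 0); nra.
  - replace (3 * ln 2) with (ln 2 + ln 2 + ln 2) by ring. rewrite !exp_plus, exp_ln; lra.
Qed.

Lemma power_deriv (e x : R) : 0 < x ->
  is_derive (fun y => exp (e * ln y)) x (e * exp ((e - 1) * ln x)).
Proof.
  intros Hx. auto_derive. lra.
  replace (e * ln x) with ((e - 1) * ln x + ln x) by ring.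
  rewrite exp_plus, exp_ln by lra. field. lra.
Qed.

Lemma power_lipschitz (e x y M : R) : 1 <= e -> 0 < x -> 0 < y -> x <= M -> y <= M ->
  Rabs (exp (e * ln x) - exp (e * ln y)) <= e * exp ((e - 1) * ln M) * Rabs (x - y).
Proof.
  intros He Hx Hy HxM HyM.
  assert (key : forall u v, 0 < u -> u < v -> v <= M ->
    Rabs (exp (e * ln v) - exp (e * ln u)) <= e * exp ((e - 1) * ln M) * Rabs (v - u)).
  { intros u v Hu Huv HvM.
    destruct (MVT_cor2 (fun y => exp (e * ln y)) (fun y => e * exp ((e - 1) * ln y)) u v Huv)
      as [c [Hc2 Hc1]].
    { intros c Hc. apply is_derive_Reals. apply power_deriv. lra. }
    rewrite Hc2, Rabs_mult. apply Rmult_le_compat_r. apply Rabs_pos.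
    rewrite Rabs_pos_eq. 2: { apply Rmult_le_pos. lra. left; apply exp_pos. }
    apply Rmult_le_compat_l. lra. apply exp_le_mono.
    apply Rmult_le_compat_l. lra. apply ln_le; lra. }
  destruct (Rtotal_order x y) as [Hl|[He'|Hg]].
  - rewrite Rabs_minus_sym, (Rabs_minus_sym x y). apply key; lra.
  - subst. unfold Rminus. rewrite !Rplus_opp_r, Rabs_R0. lra.
  - apply key; lra.
Qed.

(** * The limiting profile [q = e^(-t/p) Theta_h] *)

Lemma alpha_pos p : 0 < p -> 0 < alpha p.
Proof. intros. unfold alpha. apply Rdiv_lt_0_compat. nra. lra. Qed.

Lemma alpha_le1 p : 0 < p <= 1 -> alpha p <= 1.
Proof.
  intros Hp. unfold alpha. apply Rmult_le_reg_r with (4*(1+p)). lra.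
  unfold Rdiv. rewrite Rmult_assoc, Rinv_l by lra. nra.
Qed.

Definition prof (p s : R) : R := exp (-(1/p) * ln (1 + alpha p * exp (2*s))).
Definition dprof (p s : R) : R :=
  -(2 * alpha p / p) * exp (2*s) / (1 + alpha p * exp (2*s)) * prof p s.
Definition prof_flux (p s : R) : R := exp ((2/p)*s) * dprof p s.

Lemma Theta_prof p t : Theta_h p t = exp (t/p) * prof p t.
Proof.
  unfold Theta_h, prof, Rpower, Rdiv. rewrite <- exp_Ropp. f_equal. f_equal. ring.
Qed.

Lemma prof_deriv p s : 0 < p -> is_derive (prof p) s (dprof p s).
Proof.
  intros Hp. pose proof (alpha_pos p Hp). pose proof (exp_pos (2*s)).
  unfold prof, dprof. auto_derive. nra.
  unfold prof. field. split; nra.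
Qed.

Lemma prof_flux_deriv p s : 0 < p ->
  is_derive (prof_flux p) s (- exp ((2/p+2)*s) * exp ((2*p+1) * ln (prof p s))).
Proof.
  intros Hp. pose proof (alpha_pos p Hp). pose proof (exp_pos (2*s)).
  unfold prof_flux, dprof, prof. auto_derive. nra.
  rewrite ln_exp.
  set (L := ln (1 + alpha p * exp (2 * s))).
  assert (HL : exp L = 1 + alpha p * exp (2*s)) by (apply exp_ln; nra).
  replace ((2 * p + 1) * (- (1 / p) * L)) with (- (1/p) * L + (-2) * L) by (field; lra).
  rewrite exp_plus.
  replace ((-2) * L) with (- (L + L)) by ring. rewrite exp_Ropp, exp_plus, HL.
  replace ((2/p+2)*s) with ((2/p)*s + 2*s) by ring. rewrite exp_plus.
  assert (Hw : 1 + alpha p * exp (2*s) <> 0) by nra.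
  unfold alpha in Hw |- *. field. repeat split; try lra. pose proof (pow2_ge_0 p). nra.
Qed.

Lemma Theta_deriv p t : 0 < p ->
  is_derive (Theta_h p) t (/p * exp (t/p) * prof p t + exp (t/p) * dprof p t).
Proof.
  intros Hp. apply is_derive_ext with (fun t => exp (t/p) * prof p t).
  { intros; symmetry; apply Theta_prof. }
  assert (H1 : is_derive (fun t => exp (t/p)) t (/p * exp (t/p))).
  { auto_derive; auto. match goal with |- ?a = ?b => change (@eq R a b) end. unfold Rdiv; ring. }
  pose proof (is_derive_mult _ _ t _ _ H1 (prof_deriv p t Hp) (fun n m => Rmult_comm n m)) as H3.
  simpl in H3. unfold mult, plus in H3; simpl in H3. exact H3.
Qed.

Lemma prof_le1 p s : 0 < p -> prof p s <= 1.
Proof.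
  intros Hp. unfold prof. apply exp_le1.
  pose proof (alpha_pos p Hp). pose proof (exp_pos (2*s)).
  assert (0 <= ln (1 + alpha p * exp (2*s))) by (rewrite <- ln_1; apply ln_le; nra).
  assert (0 < 1/p) by (apply Rdiv_lt_0_compat; lra). nra.
Qed.

Lemma prof_lower p s : 0 < p -> 1 - alpha p * exp (2*s) / p <= prof p s.
Proof.
  intros Hp. pose proof (alpha_pos p Hp). pose proof (exp_pos (2*s)).
  unfold prof. eapply Rle_trans. 2: apply exp_ineq1_le.
  assert (ln (1 + alpha p * exp (2*s)) <= alpha p * exp (2*s)) by (apply ln_1_plus_le; nra).
  assert (0 < 1/p) by (apply Rdiv_lt_0_compat; lra).
  unfold Rdiv. nra.
Qed.

Lemma prof_lower_Z p s Z : 0 < p -> exp (2*s) <= Z ->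
  exp (-(1/p) * ln (1 + alpha p * Z)) <= prof p s.
Proof.
  intros Hp HZ. pose proof (alpha_pos p Hp). pose proof (exp_pos (2*s)).
  unfold prof. apply exp_le_mono.
  assert (ln (1 + alpha p * exp (2*s)) <= ln (1 + alpha p * Z)) by (apply ln_le; nra).
  assert (0 < 1/p) by (apply Rdiv_lt_0_compat; lra). nra.
Qed.

Lemma prof_pow p s : 0 < p -> exp (2 * p * ln (prof p s)) = / (1 + alpha p * exp (2*s))^2.
Proof.
  intros Hp. pose proof (alpha_pos p Hp). pose proof (exp_pos (2*s)).
  unfold prof. rewrite ln_exp.
  replace (2 * p * (- (1 / p) * ln (1 + alpha p * exp (2 * s))))
    with (- (ln (1 + alpha p * exp (2 * s)) + ln (1 + alpha p * exp (2 * s)))) by (field; lra).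
  rewrite exp_Ropp, exp_plus, exp_ln by nra. simpl. f_equal. ring.
Qed.

Lemma dprof_bound p s : 0 < p -> Rabs (dprof p s) <= 2 * alpha p / p * exp (2*s).
Proof.
  intros Hp. pose proof (alpha_pos p Hp). pose proof (exp_pos (2*s)).
  pose proof (prof_le1 p s Hp).
  assert (Hq : 0 < prof p s) by apply exp_pos.
  assert (0 < 2 * alpha p / p) by (apply Rdiv_lt_0_compat; lra).
  assert (Hw : 1 <= 1 + alpha p * exp (2*s)) by nra.
  assert (Hi1 : 0 < / (1 + alpha p * exp (2 * s))) by (apply Rinv_0_lt_compat; lra).
  assert (Hi2 : / (1 + alpha p * exp (2 * s)) <= 1).
  { pose proof (Rinv_le_contravar 1 _ Rlt_0_1 Hw). rewrite Rinv_1 in H3. exact H3. }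
  assert (Hf : 0 <= exp (2 * s) / (1 + alpha p * exp (2 * s)) * prof p s <= exp (2*s)).
  { unfold Rdiv. split. apply Rmult_le_pos; [apply Rmult_le_pos|]; lra.
    assert (exp (2 * s) * / (1 + alpha p * exp (2 * s)) <= exp (2*s)) by nra.
    assert (0 <= exp (2 * s) * / (1 + alpha p * exp (2 * s))) by nra. nra. }
  unfold dprof.
  replace (- (2 * alpha p / p) * exp (2 * s) / (1 + alpha p * exp (2 * s)) * prof p s)
    with (- (2 * alpha p / p * (exp (2 * s) / (1 + alpha p * exp (2 * s)) * prof p s))) by (field; nra).
  rewrite Rabs_Ropp, Rabs_pos_eq by (apply Rmult_le_pos; lra).
  apply Rmult_le_compat_l; lra.
Qed.

(** * The barrier [Y] *)

(* [Y(s) = exp (k phi(s)) (A + B e^(2s))] with [phi(s) = -1/(1 + al e^s)]; its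
   flux [W = e^(2s/p) Y'] grows fast enough to dominate the linearised
   forcing of the difference [G - q] (lemma [barrier_supersolution]). *)
Definition bphi (al s : R) : R := - / (1 + al * exp s).
Definition dbphi (al s : R) : R := al * exp s / (1 + al * exp s)^2.
Definition ddbphi (al s : R) : R := al * exp s * (1 - al * exp s) / (1 + al * exp s)^3.
Definition bpoly (A B s : R) : R := A + B * exp s ^ 2.
Definition barY (al k A B s : R) : R := exp (k * bphi al s) * bpoly A B s.
Definition dbarY (al k A B s : R) : R :=
  exp (k * bphi al s) * (k * dbphi al s * bpoly A B s + 2 * B * exp s ^ 2).
Definition ddbarY (al k A B s : R) : R :=
  exp (k * bphi al s) * (k * ddbphi al s * bpoly A B s + k^2 * dbphi al s ^ 2 * bpoly A B s
     + 2 * k * dbphi al s * (2 * B * exp s ^ 2) + 4 * B * exp s ^ 2).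
Definition barW (p al k A B s : R) : R := exp ((2/p)*s) * dbarY al k A B s.
Definition dbarW (p al k A B s : R) : R :=
  exp ((2/p)*s) * (ddbarY al k A B s + (2/p) * dbarY al k A B s).

Lemma barY_deriv al k A B s : 0 < al -> is_derive (barY al k A B) s (dbarY al k A B s).
Proof.
  intros Hal. pose proof (exp_pos s).
  unfold barY, dbarY, bpoly, bphi, dbphi. auto_derive. nra.
  field. nra.
Qed.

Lemma dbarY_deriv al k A B s : 0 < al -> is_derive (dbarY al k A B) s (ddbarY al k A B s).
Proof.
  intros Hal. pose proof (exp_pos s).
  unfold dbarY, ddbarY, bpoly, bphi, dbphi, ddbphi. auto_derive. repeat split; nra.
  field. nra.
Qed.

Lemma barW_deriv p al k A B s : 0 < al -> is_derive (barW p al k A B) s (dbarW p al k A B s).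
Proof.
  intros Hal. unfold barW, dbarW.
  assert (H1 : is_derive (fun s => exp (2/p*s)) s (2/p * exp (2/p*s))) by (auto_derive; auto; ring).
  pose proof (is_derive_mult _ _ s _ _ H1 (dbarY_deriv al k A B s Hal) (fun n m => Rmult_comm n m)) as H3.
  simpl in H3. unfold mult, plus in H3; simpl in H3.
  replace (exp (2 / p * s) * (ddbarY al k A B s + 2 / p * dbarY al k A B s))
   with (2 / p * exp (2 / p * s) * dbarY al k A B s + exp (2 / p * s) * ddbarY al k A B s) by ring.
  exact H3.
Qed.

Lemma bphi_range al s : 0 < al -> -1 <= bphi al s <= 0.
Proof.
  intros Hal. unfold bphi. pose proof (exp_pos s).
  assert (H1 : 1 <= 1 + al * exp s) by nra.
  split.
  - apply Ropp_le_contravar. pose proof (Rinv_le_contravar 1 _ Rlt_0_1 H1).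
    rewrite Rinv_1 in H0. exact H0.
  - assert (0 < / (1 + al * exp s)) by (apply Rinv_0_lt_compat; lra). lra.
Qed.

Lemma dbphi_range al s : 0 < al -> 0 <= dbphi al s <= 1.
Proof.
  intros Hal. unfold dbphi. pose proof (exp_pos s).
  assert (0 < al * exp s) by nra.
  assert (0 < (1 + al * exp s)^2) by (apply pow_lt; lra).
  split. apply Rdiv_le_0_compat; lra.
  apply Rmult_le_reg_r with ((1 + al * exp s)^2); auto.
  unfold Rdiv. rewrite Rmult_assoc, Rinv_l by lra. nra.
Qed.

Lemma exp_bphi_range al k s : 0 < al -> 0 <= k -> exp (-k) <= exp (k * bphi al s) <= 1.
Proof.
  intros Hal Hk. pose proof (bphi_range al s Hal). split.
  - apply exp_le_mono. nra.
  - apply exp_le1. nra.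
Qed.

(* The two polynomial inequalities behind the supersolution property. *)
Lemma barrier_poly_ineq a r : 0 < a <= 1 -> 0 < r ->
  a * r * (1 + a * r)^2 <= (1 + a * r^2)^2.
Proof.
  intros Ha Hr.
  assert (H2 : 2 * a * r <= 1 + a * r^2).
  { assert (0 <= a * (r - 1)^2) by (apply Rmult_le_pos; [lra| apply pow2_ge_0]). nra. }
  assert (H1 : (1 + a*r)^2 <= 2 * (1 + a * r^2)).
  { assert (a*a*r^2 <= a * r^2) by (assert (0 <= r^2) by nra; nra). nra. }
  assert (0 <= a * r) by nra.
  apply Rle_trans with (a * r * (2 * (1 + a * r^2))).
  - apply Rmult_le_compat_l; auto.
  - assert (0 <= 1 + a * r^2) by nra. nra.
Qed.

Lemma barrier_coeff_ineq p a c1 r : 0 < p <= 1 -> 0 < a <= 1 -> 0 <= c1 -> 0 < r ->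
  c1 * r^2 / (1 + a * r^2)^2 <=
  (c1 / a^2) * (a * r * (1 - a * r) / (1 + a * r)^3 + (2/p) * (a * r / (1 + a * r)^2)).
Proof.
  intros Hp Ha Hc Hr.
  assert (Hd : 0 < 1 + a * r) by nra.
  assert (Hd2 : 0 < 1 + a * r^2) by nra.
  assert (S1 : a * r / (1 + a*r)^2 <= a * r * (1 - a * r) / (1 + a * r)^3 + (2/p) * (a * r / (1 + a * r)^2)).
  { replace (a * r * (1 - a * r) / (1 + a * r)^3 + (2/p) * (a * r / (1 + a * r)^2))
      with (a * r / (1 + a*r)^2 * (((1 - a*r) + (2/p) * (1 + a*r)) / (1 + a*r))) by (field; lra).
    rewrite <- (Rmult_1_r (a * r / (1 + a*r)^2)) at 1.
    apply Rmult_le_compat_l. apply Rlt_le, Rdiv_lt_0_compat; [nra| apply pow_lt; lra].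
    apply Rmult_le_reg_r with (1 + a*r); auto. unfold Rdiv. rewrite Rmult_assoc, Rinv_l by lra.
    assert (2/p >= 2).
    { apply Rle_ge. apply Rmult_le_reg_r with p. lra. unfold Rdiv. rewrite Rmult_assoc, Rinv_l; lra. }
    nra. }
  apply Rle_trans with ((c1 / a^2) * (a * r / (1 + a*r)^2)).
  2: { apply Rmult_le_compat_l; auto. apply Rdiv_le_0_compat; auto. apply pow_lt; lra. }
  replace ((c1 / a^2) * (a * r / (1 + a*r)^2)) with (c1 * (r / (a * (1 + a*r)^2))) by (field; lra).
  unfold Rdiv at 1. rewrite Rmult_assoc. apply Rmult_le_compat_l; auto.
  pose proof (barrier_poly_ineq a r Ha Hr).
  apply Rmult_le_reg_r with ((1 + a * r^2)^2 * (a * (1 + a*r)^2)).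
  { apply Rmult_lt_0_compat. apply pow_lt; lra. apply Rmult_lt_0_compat. lra. apply pow_lt; lra. }
  replace (r ^ 2 * / (1 + a * r ^ 2) ^ 2 * ((1 + a * r ^ 2) ^ 2 * (a * (1 + a * r) ^ 2)))
    with (r * (a * r * (1 + a*r)^2)) by (field; lra).
  replace (r / (a * (1 + a * r) ^ 2) * ((1 + a * r ^ 2) ^ 2 * (a * (1 + a * r) ^ 2)))
    with (r * (1 + a * r^2)^2) by (field; lra).
  apply Rmult_le_compat_l; lra.
Qed.

Lemma barrier_supersolution p al k A B c1 ph0 s : 0 < p <= 1 -> 0 < al <= 1 -> 0 <= c1 ->
  k = c1 / al^2 -> 0 <= A -> 0 <= ph0 -> B = ph0 * exp k / 4 ->
  exp (2/p*s) * (exp s ^2 * (c1 / (1 + al * exp s ^2)^2 * barY al k A B s + ph0))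
   <= dbarW p al k A B s.
Proof.
  intros Hp Hal Hc Hk HA Hph HB.
  assert (Hk0 : 0 <= k) by (rewrite Hk; apply Rdiv_le_0_compat; auto; apply pow_lt; lra).
  unfold dbarW, ddbarY, dbarY, barY.
  apply Rmult_le_compat_l. left; apply exp_pos.
  pose proof (barrier_coeff_ineq p al c1 (exp s) Hp Hal Hc (exp_pos s)) as Hi.
  rewrite <- Hk in Hi. fold (dbphi al s) in Hi. fold (ddbphi al s) in Hi.
  set (r := exp s) in *. set (E := exp (k * bphi al s)).
  set (H := bpoly A B s). set (d1 := dbphi al s). set (d2 := ddbphi al s).
  assert (HE : exp (-k) <= E) by apply (exp_bphi_range al k s (proj1 Hal) Hk0).
  fold d1 d2 in Hi. assert (Hr : 0 < r) by (unfold r; apply exp_pos).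
  assert (Ep : 0 < E) by apply exp_pos.
  assert (Bp : 0 <= B) by (rewrite HB; pose proof (exp_pos k); nra).
  assert (r2 : 0 <= r^2) by apply pow2_ge_0.
  assert (Hp0 : 0 <= H) by (unfold H, bpoly; fold r; nra).
  assert (d1p : 0 <= d1) by apply (dbphi_range al s (proj1 Hal)).
  assert (pp : 0 < 2/p) by (apply Rdiv_lt_0_compat; lra).
  replace (E * (k * d2 * H + k ^ 2 * d1 ^ 2 * H + 2 * k * d1 * (2 * B * r ^ 2) + 4 * B * r ^ 2) +
    2 / p * (E * (k * d1 * H + 2 * B * r ^ 2)))
   with ((E*H)*(k*(d2+2/p*d1)) + E*(4*B*r^2)
         + (E*(k^2*d1^2*H) + E*(2*k*d1*(2*B*r^2)) + 2/p*(E*(2*B*r^2)))) by ring.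
  replace (r ^ 2 * (c1 / (1 + al * r ^ 2) ^ 2 * (E * H) + ph0))
   with ((E*H) * (c1 * r ^ 2 / (1 + al * r ^ 2) ^ 2) + ph0 * r^2)
   by (field; assert (0 <= al*r^2) by (apply Rmult_le_pos; lra); lra).
  assert (N1 : 0 <= E*(k^2*d1^2*H) + E*(2*k*d1*(2*B*r^2)) + 2/p*(E*(2*B*r^2))).
  { assert (0 <= k^2) by apply pow2_ge_0. assert (0 <= d1^2) by apply pow2_ge_0.
    assert (X1 : 0 <= 2*B*r^2) by (apply Rmult_le_pos; lra).
    assert (X2 : 0 <= k^2*d1^2*H) by (apply Rmult_le_pos; [apply Rmult_le_pos|]; lra).
    assert (X3 : 0 <= 2*k*d1*(2*B*r^2))
      by (apply Rmult_le_pos; [apply Rmult_le_pos; [apply Rmult_le_pos|]|]; lra).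
    assert (0 <= E*(k^2*d1^2*H)) by (apply Rmult_le_pos; lra).
    assert (0 <= E*(2*k*d1*(2*B*r^2))) by (apply Rmult_le_pos; lra).
    assert (0 <= 2/p*(E*(2*B*r^2))) by (apply Rmult_le_pos; [|apply Rmult_le_pos]; lra).
    lra. }
  assert (N2 : (E*H) * (c1 * r ^ 2 / (1 + al * r ^ 2) ^ 2) <= (E*H)*(k*(d2+2/p*d1))).
  { apply Rmult_le_compat_l; auto. apply Rmult_le_pos; lra. }
  assert (N3 : ph0 * r^2 <= E*(4*B*r^2)).
  { assert (Hph0 : ph0 = exp (-k) * (4 * B)).
    { rewrite HB, exp_Ropp. field. pose proof (exp_pos k); lra. }
    rewrite Hph0. replace (exp (- k) * (4 * B) * r ^ 2) with (exp (-k) * (4*B*r^2)) by ring.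
    apply Rmult_le_compat_r; auto. nra. }
  lra.
Qed.

Lemma barY_upper al k A B Z s : 0 < al -> 0 <= k -> 0 <= A -> 0 <= B -> exp s ^ 2 <= Z ->
  barY al k A B s <= A + B * Z.
Proof.
  intros Hal Hk HA HB HZ. unfold barY, bpoly. pose proof (exp_bphi_range al k s Hal Hk).
  assert (0 <= exp s ^2) by apply pow2_ge_0.
  assert (A + B * exp s ^ 2 <= A + B * Z) by nra.
  assert (0 <= A + B * exp s ^ 2) by nra. nra.
Qed.

Lemma barY_lower al k A B s : 0 < al -> 0 <= k -> 0 <= A -> 0 <= B ->
  exp (-k) * A <= barY al k A B s.
Proof.
  intros Hal Hk HA HB. unfold barY, bpoly. pose proof (exp_bphi_range al k s Hal Hk).
  assert (0 <= exp s ^2) by apply pow2_ge_0. pose proof (exp_pos (-k)).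
  assert (0 <= B * exp s ^2) by nra. nra.
Qed.

Lemma dbarY_range al k A B Z s : 0 < al -> 0 <= k -> 0 <= A -> 0 <= B -> exp s ^ 2 <= Z ->
  0 <= dbarY al k A B s <= k * (A + B * Z) + 2 * B * Z.
Proof.
  intros Hal Hk HA HB HZ. unfold dbarY, bpoly. pose proof (exp_bphi_range al k s Hal Hk).
  pose proof (dbphi_range al s Hal).
  assert (0 <= exp s ^2) by apply pow2_ge_0.
  assert (0 <= A + B * exp s ^ 2) by nra.
  assert (A + B * exp s ^ 2 <= A + B * Z) by nra.
  assert (0 <= k * dbphi al s * (A + B * exp s ^ 2)) by (apply Rmult_le_pos; nra).
  assert (k * dbphi al s * (A + B * exp s ^ 2) <= k * (A + B * Z)).
  { apply Rle_trans with (k * 1 * (A + B * exp s ^ 2)).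
    apply Rmult_le_compat_r; auto. apply Rmult_le_compat_l; lra. nra. }
  assert (2 * B * exp s ^ 2 <= 2 * B * Z) by nra.
  set (E := exp (k * bphi al s)) in *.
  set (X := k * dbphi al s * (A + B * exp s ^ 2) + 2 * B * exp s ^ 2).
  assert (0 <= 2 * B * exp s ^ 2) by (apply Rmult_le_pos; lra).
  assert (0 <= X) by (unfold X; lra).
  assert (X <= k * (A + B * Z) + 2 * B * Z) by (unfold X; lra).
  split.
  - apply Rmult_le_pos; [unfold E; left; apply exp_pos|lra].
  - apply Rle_trans with X; [|lra]. rewrite <- (Rmult_1_l X) at 2. apply Rmult_le_compat_r; lra.
Qed.

(** * The rescaled solution [G(s) = f(b^(-p) e^s) / b] *)

(* With [eps = b^(-2p)], [G] satisfies
   [(e^(2s/p) G')' = e^((2/p+2)s) forcing(G)]; for [eps = 0] this is the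
   equation solved by the profile [q]. *)
Definition forcing (p lam eps g s : R) : R :=
  eps^2 * exp (2*s) * g - eps * lam * g - nonlin p g.

Definition rescaled (p b : R) (f : R -> R) (s : R) : R :=
  f (exp (-p * ln b) * exp s) / b.
Definition drescaled (p b : R) (f : R -> R) (s : R) : R :=
  exp (-p * ln b) * exp s / b * Derive f (exp (-p * ln b) * exp s).

Lemma rescaled_deriv p lam b f s : 0 < b -> is_classical_sol p lam b f ->
  is_derive (rescaled p b f) s (drescaled p b f s).
Proof.
  intros Hb [Hode _]. unfold rescaled, drescaled.
  set (c := exp (-p*ln b)).
  assert (Hr : 0 < c * exp s) by (apply Rmult_lt_0_compat; apply exp_pos).
  destruct (Hode _ Hr) as [[df Hdf] _].
  auto_derive. exists df; exact Hdf.
  change (c * (1 * exp s) * Derive f (c * exp s) * / b = c * exp s / b * Derive f (c * exp s) :> R).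
  field; lra.
Qed.

Lemma rescaled_flux_deriv p lam b f s : 0 < p -> 0 < b -> is_classical_sol p lam b f ->
  is_derive (fun s => exp (2/p*s) * drescaled p b f s) s
    (exp ((2/p+2)*s) * forcing p lam (exp (-2*p*ln b)) (rescaled p b f s) s).
Proof.
  intros Hp Hb [Hode _]. unfold rescaled, drescaled, forcing.
  set (c := exp (-p*ln b)).
  assert (Hr : 0 < c * exp s) by (apply Rmult_lt_0_compat; apply exp_pos).
  destruct (Hode _ Hr) as [[df Hdf] [[ddf Hddf] Heq]].
  auto_derive. exists ddf; exact Hddf.
  set (r := c * exp s) in *.
  change (Derive (fun x : R => Derive f x) r) with (Derive_n f 2 r).
  assert (HD2 : Derive_n f 2 r = - ((dim p - 1) / r * Derive f r) + r ^ 2 * f r - lam * f r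
     - rpow0 (Rabs (f r)) (2 * p) * f r) by lra.
  rewrite HD2. fold (nonlin p (f r)).
  replace (nonlin p (f r)) with (nonlin p (b * (f r / b))) by (f_equal; field; lra).
  rewrite nonlin_scale by lra.
  assert (Hc2 : c^2 = exp (-2*p*ln b)).
  { unfold c. simpl. rewrite Rmult_1_r, <- exp_plus. f_equal. ring. }
  rewrite <- Hc2.
  replace ((2/p+2)*s) with (2/p*s + 2*s) by ring. rewrite exp_plus, exp_double.
  unfold r, dim.
  replace (exp (2 * p * ln b)) with (/ c^2)
    by (rewrite Hc2, <- exp_Ropp; f_equal; ring).
  assert (Hcpos : 0 < c) by apply exp_pos. pose proof (exp_pos s).
  field. repeat split; lra.
Qed.

Lemma rescaled_to_1 p lam b f : 0 < b -> is_classical_sol p lam b f ->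
  forall e, 0 < e -> exists s1, forall s, s <= s1 -> Rabs (rescaled p b f s - 1) <= e.
Proof.
  intros Hb [_ [Hf0 Hlim]] e He. unfold rescaled.
  set (c := exp (-p*ln b)). assert (Hc : 0 < c) by apply exp_pos.
  destruct (proj1 (filterlim_locally _ _) Hlim (mkposreal 1 Rlt_0_1)) as [d Hd].
  set (m := Rmin (d/2) (e*b)).
  assert (Hm : 0 < m) by (apply Rmin_pos; [destruct d; simpl; lra| nra]).
  exists (ln (m / c)). intros s Hs.
  set (y := c * exp s).
  assert (Hy0 : 0 < y) by (unfold y; pose proof (exp_pos s); nra).
  assert (Hym : y <= m).
  { unfold y. apply Rmult_le_reg_l with (/c). apply Rinv_0_lt_compat; auto.
    rewrite <- Rmult_assoc, Rinv_l, Rmult_1_l by lra.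
    replace (/ c * m) with (m / c) by (field; lra). rewrite <- (exp_ln (m/c)).
    apply exp_le_mono; auto. apply Rdiv_lt_0_compat; auto. }
  pose proof (Rmin_l (d/2) (e*b)). pose proof (Rmin_r (d/2) (e*b)). fold m in H, H0.
  assert (Hball : ball 0 d y).
  { unfold ball; simpl. unfold AbsRing_ball, minus, plus, opp, abs; simpl.
    rewrite Ropp_0, Rplus_0_r, Rabs_pos_eq by lra. destruct d; simpl in *; lra. }
  specialize (Hd y Hball Hy0).
  unfold ball in Hd; simpl in Hd. unfold AbsRing_ball, minus, plus, opp, abs in Hd; simpl in Hd.
  rewrite Ropp_0, Rplus_0_r, Hf0 in Hd.
  replace ((f y - b) / y) with ((f y - b) * / y) in Hd by reflexivity.
  rewrite Rabs_mult, Rabs_inv, (Rabs_pos_eq y) in Hd by lra.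
  assert (Rabs (f y - b) < y).
  { apply Rmult_lt_reg_r with (/ y). apply Rinv_0_lt_compat; auto. rewrite Rinv_r by lra. lra. }
  replace (f y / b - 1) with ((f y - b) / b) by (field; lra).
  unfold Rdiv. rewrite Rabs_mult, Rabs_inv, (Rabs_pos_eq b) by lra.
  apply Rmult_le_reg_r with b. auto. rewrite Rmult_assoc, Rinv_l by lra. lra.
Qed.

Lemma growth_from_flux (G dG : R -> R) k0 c s0 : 0 < k0 ->
  (forall s, is_derive G s (dG s)) -> (forall t, t <= s0 -> c <= exp (k0*t) * dG t) ->
  forall t, t <= s0 -> c / k0 * (exp (-k0*t) - exp (-k0*s0)) <= G s0 - G t.
Proof.
  intros Hk0 HG Hflux t Ht.
  assert (Hmono : G t + c/k0 * exp (-k0*t) <= G s0 + c/k0 * exp (-k0*s0)).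
  { apply (nondecreasing_of_deriv (fun x => G x + c/k0 * exp (-k0*x))
             (fun x => dG x - c * exp (-k0*x))); auto.
    - intros x _. replace (dG x - c * exp (-k0*x)) with (dG x + (- c * exp (-k0*x))) by ring.
      apply (is_derive_plus G (fun x => c/k0 * exp (-k0*x))); auto.
      auto_derive; auto. field. lra.
    - intros x Hx. specialize (Hflux x ltac:(lra)).
      assert (HdG : dG x = exp (-k0*x) * (exp (k0*x) * dG x)).
      { rewrite <- Rmult_assoc, <- exp_plus. replace (-k0*x + k0*x) with 0 by ring.
        rewrite exp_0; ring. }
      rewrite HdG. pose proof (exp_pos (-k0*x)). nra. }
  lra.
Qed.

(* If [G] stays bounded near [-oo] and the flux [V = e^(k0 s) G'] oscillates
   by at most [M e^(k1 s)] below [s], then [V -> 0] at [-oo]: otherwise [V]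
   keeps a sign and a size [e/2] far to the left, and [G] is unbounded. *)
Lemma flux_vanishes (G dG : R -> R) k0 k1 M s1 :
  0 < k0 -> 0 < k1 -> 0 <= M -> s1 <= 0 ->
  (forall s, is_derive G s (dG s)) ->
  (forall sg s, sg <= s -> s <= s1 ->
     Rabs (exp (k0*s) * dG s - exp (k0*sg) * dG sg) <= M * exp (k1 * s)) ->
  (forall sg s, sg <= s1 -> s <= s1 -> Rabs (G s - G sg) <= 1) ->
  forall e, 0 < e -> exists s2, forall s, s <= s2 -> Rabs (exp (k0*s) * dG s) <= e.
Proof.
  intros Hk0 Hk1 HM Hs1 HG HV HGb e He.
  set (c := e / (2*(M+1))). assert (Hc : 0 < c) by (unfold c; apply Rdiv_lt_0_compat; lra).
  exists (Rmin s1 (ln c / k1)). intros s0 Hs0.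
  pose proof (Rmin_l s1 (ln c / k1)). pose proof (Rmin_r s1 (ln c / k1)).
  assert (Hosc : M * exp (k1 * s0) <= e/2).
  { assert (exp (k1 * s0) <= c).
    { rewrite <- (exp_ln c) by auto. apply exp_le_mono.
      apply Rmult_le_reg_r with (/k1). apply Rinv_0_lt_compat; auto.
      replace (k1 * s0 * / k1) with s0 by (field; lra). unfold Rdiv in H0. lra. }
    apply Rle_trans with ((M+1) * c). pose proof (exp_pos (k1*s0)). nra.
    unfold c. right. field. lra. }
  destruct (Rle_lt_dec (Rabs (exp (k0*s0) * dG s0)) e) as [Hok|Hbad]; auto.
  exfalso.
  assert (Hsg : exists sg, (sg = 1 \/ sg = -1) /\ e < sg * (exp (k0*s0) * dG s0)).
  { unfold Rabs in Hbad. destruct (Rcase_abs (exp (k0*s0) * dG s0)).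
    exists (-1). split; [right; auto| lra]. exists 1. split; [left; auto| lra]. }
  destruct Hsg as [sg [Hsg Hsgv]].
  assert (Hflux : forall t, t <= s0 -> e/2 <= exp (k0*t) * (sg * dG t)).
  { intros t Ht. specialize (HV t s0 Ht ltac:(lra)).
    apply Rabs_le_between in HV. destruct Hsg as [->| ->]; lra. }
  pose proof (growth_from_flux (fun t => sg * G t) (fun t => sg * dG t) k0 (e/2) s0 Hk0
                (fun s => is_derive_scal G s sg _ (HG s)) Hflux) as Hgrowth.
  set (t := - ln (exp (-k0*s0) + 4*k0/e) / k0).
  assert (Hq : 0 < 4*k0/e) by (apply Rdiv_lt_0_compat; lra).
  pose proof (exp_pos (-k0*s0)).
  assert (Hexp : exp (-k0*t) = exp (-k0*s0) + 4*k0/e).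
  { unfold t. replace (-k0 * (- ln (exp (-k0*s0) + 4*k0/e) / k0)) with (ln (exp (-k0*s0) + 4*k0/e))
      by (field; lra). apply exp_ln. lra. }
  assert (Ht : t <= s0).
  { destruct (Rle_lt_dec t s0) as [|Hlt]; auto. exfalso.
    assert (exp (-k0*t) < exp (-k0*s0)) by (apply exp_increasing; nra). lra. }
  specialize (Hgrowth t Ht). rewrite Hexp in Hgrowth.
  replace (e / 2 / k0 * (exp (- k0 * s0) + 4 * k0 / e - exp (- k0 * s0))) with 2 in Hgrowth
    by (field; lra).
  specialize (HGb t s0 ltac:(lra) ltac:(lra)). apply Rabs_le_between in HGb.
  destruct Hsg as [-> | ->]; lra.
Qed.

Lemma forcing_bound p lam eps g s : 0 < p <= 1 -> 0 < eps <= 1 -> s <= 0 ->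
  1/2 <= g <= 3/2 -> Rabs (forcing p lam eps g s) <= 2 * (eps^2 + eps * Rabs lam) + 8.
Proof.
  intros Hp He Hs Hg. unfold forcing.
  assert (exp (2*s) <= 1) by (apply exp_le1; lra).
  pose proof (exp_pos (2*s)). pose proof (nonlin_bound p g Hp Hg).
  eapply Rle_trans. apply Rabs_triang. eapply Rle_trans. apply Rplus_le_compat_r. apply Rabs_triang.
  rewrite Rabs_Ropp, Rabs_Ropp, !Rabs_mult.
  rewrite (Rabs_pos_eq eps), (Rabs_pos_eq (eps^2)), (Rabs_pos_eq (exp (2*s)))
    by (try apply pow2_ge_0; lra).
  assert (Rabs g <= 2) by (rewrite Rabs_pos_eq; lra).
  assert (0 <= eps^2) by apply pow2_ge_0. pose proof (Rabs_pos lam). pose proof (Rabs_pos g).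
  assert (eps ^ 2 * exp (2 * s) * Rabs g <= eps^2 * 2).
  { rewrite Rmult_assoc. apply Rmult_le_compat_l. lra. nra. }
  assert (eps * Rabs lam * Rabs g <= eps * Rabs lam * 2) by (apply Rmult_le_compat_l; nra).
  lra.
Qed.

Lemma rescaled_flux_to_0 p lam eps (G dG : R -> R) : 0 < p <= 1 -> 0 < eps <= 1 ->
  (forall s, is_derive G s (dG s)) ->
  (forall s, is_derive (fun s => exp (2/p*s) * dG s) s
       (exp ((2/p+2)*s) * forcing p lam eps (G s) s)) ->
  (forall e, 0 < e -> exists s1, forall s, s <= s1 -> Rabs (G s - 1) <= e) ->
  forall e, 0 < e -> exists s2, forall s, s <= s2 -> Rabs (exp (2/p*s) * dG s) <= e.
Proof.
  intros Hp He HG HV HG1.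
  destruct (HG1 (1/2)) as [s1 Hs1]. lra.
  set (s1' := Rmin s1 0). assert (Hs1' : s1' <= s1) by apply Rmin_l.
  assert (Hs10 : s1' <= 0) by apply Rmin_r.
  set (k1 := 2/p+2).
  assert (Hk1 : 0 < k1) by (unfold k1; assert (0 < 2/p) by (apply Rdiv_lt_0_compat; lra); lra).
  set (M0 := 2*(eps^2 + eps*Rabs lam) + 8).
  assert (HM0 : 0 <= M0).
  { unfold M0. pose proof (Rabs_pos lam). assert (0 <= eps^2) by apply pow2_ge_0. nra. }
  apply (flux_vanishes G dG (2/p) k1 (M0/k1) s1'); auto.
  - apply Rdiv_lt_0_compat; lra.
  - apply Rdiv_le_0_compat; lra.
  - intros sg s Hsg Hs.
    assert (Hinc : Rabs (exp (2/p*s) * dG s - exp (2/p*sg) * dG sg)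
                   <= M0/k1 * exp (k1*s) - M0/k1 * exp (k1*sg)).
    { apply (increment_comparison (fun t => exp (2/p*t) * dG t)
               (fun t => exp (k1*t) * forcing p lam eps (G t) t)
               (fun t => M0/k1 * exp (k1*t)) (fun t => M0 * exp (k1*t))).
      - exact Hsg.
      - intros t Ht. apply HV.
      - intros t Ht. auto_derive; auto. field. lra.
      - intros t Ht. specialize (Hs1 t ltac:(lra)). apply Rabs_le_between in Hs1.
        rewrite Rabs_mult, Rabs_pos_eq by (left; apply exp_pos). rewrite Rmult_comm.
        apply Rmult_le_compat_r. left; apply exp_pos.
        apply forcing_bound; lra. }
    pose proof (exp_pos (k1*sg)). assert (0 <= M0/k1) by (apply Rdiv_le_0_compat; lra).
    assert (0 <= M0/k1 * exp (k1*sg)) by (apply Rmult_le_pos; lra). lra.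
  - intros sg s Hsg Hs. pose proof (Hs1 s ltac:(lra)). pose proof (Hs1 sg ltac:(lra)).
    apply Rabs_le_between in H. apply Rabs_le_between in H0. apply Rabs_le. lra.
Qed.

(** * Comparison of [G] with the profile [q] *)

Lemma two_pow_le4 p : 0 < p <= 1 -> exp (2*p*ln 2) <= 4.
Proof.
  intros Hp. assert (0 < ln 2) by (rewrite <- ln_1; apply ln_increasing; lra).
  apply Rle_trans with (exp (2 * ln 2)). apply exp_le_mono. nra.
  replace (2 * ln 2) with (ln 2 + ln 2) by ring. rewrite exp_plus, exp_ln; lra.
Qed.

Lemma nonlin_diff_bound p t g : 0 < p <= 1 -> 0 < g <= 2 * prof p t ->
  Rabs (exp ((2*p+1) * ln g) - exp ((2*p+1) * ln (prof p t)))
  <= 4 * (2*p+1) / (1 + alpha p * exp (2*t))^2 * Rabs (g - prof p t).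
Proof.
  intros Hp Hg. set (q := prof p t) in *. set (z := exp (2*t)).
  assert (Hq0 : 0 < q) by apply exp_pos.
  eapply Rle_trans. apply (power_lipschitz (2*p+1) g q (2*q)); lra.
  replace (2 * p + 1 - 1) with (2*p) by ring.
  rewrite ln_mult by lra. rewrite Rmult_plus_distr_l, exp_plus.
  unfold q. rewrite prof_pow by lra. fold q z.
  pose proof (two_pow_le4 p Hp).
  assert (Hiw : 0 < / (1 + alpha p * z)^2).
  { apply Rinv_0_lt_compat, pow_lt. pose proof (alpha_pos p (proj1 Hp)). assert (0 < z) by apply exp_pos. nra. }
  apply Rmult_le_compat_r. apply Rabs_pos.
  replace (4 * (2 * p + 1) / (1 + alpha p * z) ^ 2)
    with ((2 * p + 1) * (4 * / (1 + alpha p * z) ^ 2)) by (unfold Rdiv; ring).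
  apply Rmult_le_compat_l. lra. apply Rmult_le_compat_r; lra.
Qed.

Lemma forcing_difference_bound p lam eps Z t g y : 0 < p <= 1 -> 0 < eps <= 1 ->
  exp (2*t) <= Z -> y < prof p t -> Rabs (g - prof p t) < y ->
  Rabs (exp ((2/p+2)*t) * forcing p lam eps g t
        - (- exp ((2/p+2)*t) * exp ((2*p+1) * ln (prof p t))))
  <= exp (2/p*t) * (exp t ^2 * (4*(2*p+1) / (1 + alpha p * exp t ^2)^2 * y
        + 2*(eps^2*Z + eps*Rabs lam))).
Proof.
  intros Hp He HZ HYq Hu. unfold forcing.
  pose proof (Rabs_pos (g - prof p t)).
  assert (Hq1 : prof p t <= 1) by (apply prof_le1; lra).
  assert (Hg : 0 < g <= 2 * prof p t) by (apply Rabs_def2 in Hu; lra).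
  pose proof (nonlin_diff_bound p t g Hp Hg) as Hlip.
  set (q := prof p t) in *. set (z := exp (2*t)) in *.
  assert (Hz : 0 < z) by apply exp_pos.
  rewrite <- exp_double. fold z.
  replace ((2/p+2)*t) with (2/p*t + 2*t) by ring. rewrite exp_plus. fold z.
  rewrite nonlin_pos by lra.
  replace (exp (2 / p * t) * z * (eps ^ 2 * z * g - eps * lam * g - exp ((2 * p + 1) * ln g)) -
   - (exp (2 / p * t) * z) * exp ((2 * p + 1) * ln q))
   with (exp (2 / p * t) * (z * ((eps ^ 2 * z - eps * lam) * g
           - (exp ((2 * p + 1) * ln g) - exp ((2 * p + 1) * ln q))))) by ring.
  rewrite Rabs_mult, Rabs_pos_eq by (left; apply exp_pos).
  apply Rmult_le_compat_l. left; apply exp_pos.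
  rewrite Rabs_mult, Rabs_pos_eq by lra.
  apply Rmult_le_compat_l. lra.
  eapply Rle_trans. apply Rabs_triang. rewrite Rabs_Ropp, Rplus_comm.
  apply Rplus_le_compat.
  - eapply Rle_trans. exact Hlip. apply Rmult_le_compat_l; [|lra].
    apply Rdiv_le_0_compat. lra. apply pow_lt. pose proof (alpha_pos p (proj1 Hp)). nra.
  - rewrite Rabs_mult.
    assert (Rabs g <= 2) by (rewrite Rabs_pos_eq; lra).
    assert (Rabs (eps ^ 2 * z - eps * lam) <= eps^2 * Z + eps * Rabs lam).
    { eapply Rle_trans. apply Rabs_triang. rewrite Rabs_Ropp, !Rabs_mult.
      rewrite (Rabs_pos_eq eps), (Rabs_pos_eq z), (Rabs_pos_eq (eps^2)) by (try apply pow2_ge_0; lra).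
      apply Rplus_le_compat_r. apply Rmult_le_compat_l; [apply pow2_ge_0|lra]. }
    assert (0 <= eps^2 * Z + eps * Rabs lam).
    { pose proof (Rabs_pos lam). assert (0 <= eps^2) by apply pow2_ge_0. nra. }
    replace (2 * (eps ^ 2 * Z + eps * Rabs lam)) with ((eps ^ 2 * Z + eps * Rabs lam) * 2) by ring.
    apply Rmult_le_compat; auto; apply Rabs_pos.
Qed.

(* The barrier parameters: growth rate [k] and quadratic coefficient [B]. *)
Definition bar_rate (p : R) : R := 4 * (2*p+1) / alpha p ^ 2.
Definition bar_coeff (p lam eps Z : R) : R :=
  2 * (eps^2 * Z + eps * Rabs lam) * exp (bar_rate p) / 4.

Lemma bar_rate_nonneg p : 0 < p -> 0 <= bar_rate p.
Proof.
  intros Hp. unfold bar_rate. apply Rdiv_le_0_compat. lra. apply pow_lt, alpha_pos; lra.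
Qed.

Lemma bar_coeff_nonneg p lam eps Z : 0 <= eps -> 0 <= Z -> 0 <= bar_coeff p lam eps Z.
Proof.
  intros He HZ. unfold bar_coeff. pose proof (exp_pos (bar_rate p)). pose proof (Rabs_pos lam).
  assert (0 <= eps^2 * Z) by (apply Rmult_le_pos; [apply pow2_ge_0 | lra]).
  assert (0 <= eps * Rabs lam) by (apply Rmult_le_pos; lra). nra.
Qed.

(* Under the smallness condition [Hgap] the difference
   [u = G - q] stays inside the barrier [Y] (with [A] the size of the
   barrier at [-oo]) up to [smax]; this is proved by continuous induction,
   the flux of [u] being controlled by the flux of [Y] thanks to the
   supersolution property. *)
Section Comparison.

Variables (p lam eps A Z smax : R) (G dG : R -> R).
Hypothesis Hp : 0 < p <= 1.
Hypothesis Heps : 0 < eps <= 1.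
Hypothesis HA : 0 < A.
Hypothesis HZ : exp (2*smax) <= Z.
Hypothesis Hgap : A + bar_coeff p lam eps Z * Z < exp (-(1/p) * ln (1 + alpha p * Z)).
Hypothesis HG : forall s, is_derive G s (dG s).
Hypothesis HV : forall s, is_derive (fun s => exp (2/p*s) * dG s) s
  (exp ((2/p+2)*s) * forcing p lam eps (G s) s).
Hypothesis HG1 : forall e, 0 < e -> exists s1, forall s, s <= s1 -> Rabs (G s - 1) <= e.
Hypothesis HV0 : forall e, 0 < e -> exists s1, forall s, s <= s1 -> Rabs (exp (2/p*s) * dG s) <= e.

Let Y := barY (alpha p) (bar_rate p) A (bar_coeff p lam eps Z).
Let dY := dbarY (alpha p) (bar_rate p) A (bar_coeff p lam eps Z).

Lemma Z_pos : 0 < Z.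
Proof. pose proof (exp_pos (2*smax)). lra. Qed.

Lemma exp_double_le_Z s : s <= smax -> exp s ^ 2 <= Z.
Proof. intros Hs. rewrite <- exp_double. eapply Rle_trans; [|apply HZ]. apply exp_le_mono; lra. Qed.

Lemma barrier_below_prof s : s <= smax -> Y s < prof p s.
Proof.
  intros Hs. pose proof (alpha_pos p (proj1 Hp)). pose proof Z_pos.
  eapply Rle_lt_trans.
  { apply barY_upper; try lra.
    - apply bar_rate_nonneg; lra.
    - apply bar_coeff_nonneg; lra.
    - apply exp_double_le_Z; auto. }
  eapply Rlt_le_trans. apply Hgap.
  apply prof_lower_Z. lra. eapply Rle_trans; [|apply HZ]. apply exp_le_mono; lra.
Qed.

Lemma barrier_lower s : exp (- bar_rate p) * A <= Y s.
Proof.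
  apply barY_lower; try lra. apply alpha_pos; lra. apply bar_rate_nonneg; lra.
  apply bar_coeff_nonneg; pose proof Z_pos; lra.
Qed.

Lemma diff_to_0 e : 0 < e -> exists s1, forall s, s <= s1 -> Rabs (G s - prof p s) <= e.
Proof.
  intros He0. pose proof (alpha_pos p (proj1 Hp)) as Hal.
  destruct (HG1 (e/2)) as [s1 Hs1]. lra.
  destruct (exp_double_small (e*p/(2*alpha p))) as [s2 [_ Hs2]].
  { apply Rdiv_lt_0_compat; nra. }
  exists (Rmin s1 s2). intros s Hs. pose proof (Rmin_l s1 s2). pose proof (Rmin_r s1 s2).
  specialize (Hs1 s ltac:(lra)). specialize (Hs2 s ltac:(lra)).
  pose proof (prof_le1 p s ltac:(lra)). pose proof (prof_lower p s ltac:(lra)).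
  assert (alpha p * exp (2 * s) / p <= e/2).
  { apply Rmult_le_reg_r with p. lra. unfold Rdiv. rewrite Rmult_assoc, Rinv_l by lra.
    apply Rmult_le_reg_r with (/ alpha p). apply Rinv_0_lt_compat; lra.
    replace (alpha p * exp (2 * s) * 1 * / alpha p) with (exp (2*s)) by (field; lra).
    replace (e * / 2 * p * / alpha p) with (e * p / (2 * alpha p)) by (field; lra). auto. }
  apply Rabs_le_between in Hs1. apply Rabs_le. lra.
Qed.

Lemma diff_flux_to_0 e : 0 < e ->
  exists s1, forall s, s <= s1 -> Rabs (exp (2/p*s) * dG s - prof_flux p s) <= e.
Proof.
  intros He0. pose proof (alpha_pos p (proj1 Hp)) as Hal.
  destruct (HV0 (e/2)) as [s1 Hs1]. lra.
  destruct (exp_double_small (e*p/(4*alpha p))) as [s2 [Hs20 Hs2]].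
  { apply Rdiv_lt_0_compat; nra. }
  exists (Rmin s1 s2). intros s Hs. pose proof (Rmin_l s1 s2). pose proof (Rmin_r s1 s2).
  specialize (Hs1 s ltac:(lra)). specialize (Hs2 s ltac:(lra)).
  pose proof (dprof_bound p s ltac:(lra)) as Hd.
  assert (He1 : exp (2/p*s) <= 1).
  { apply exp_le1. assert (0 < 2/p) by (apply Rdiv_lt_0_compat; lra). nra. }
  assert (Hvq : Rabs (prof_flux p s) <= e/2).
  { unfold prof_flux. rewrite Rabs_mult, Rabs_pos_eq by (left; apply exp_pos).
    apply Rle_trans with (1 * (2 * alpha p / p * exp (2 * s))).
    { apply Rmult_le_compat; auto. left; apply exp_pos. apply Rabs_pos. }
    rewrite Rmult_1_l.
    apply Rmult_le_reg_r with p. lra. unfold Rdiv.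
    replace (2 * alpha p * / p * exp (2 * s) * p) with (2 * alpha p * exp (2*s)) by (field; lra).
    apply Rmult_le_reg_r with (/ (2*alpha p)). apply Rinv_0_lt_compat; lra.
    replace (2 * alpha p * exp (2 * s) * / (2 * alpha p)) with (exp (2*s)) by (field; lra).
    replace (e * / 2 * p * / (2 * alpha p)) with (e * p / (4 * alpha p)) by (field; lra). auto. }
  eapply Rle_trans. apply Rabs_triang. rewrite Rabs_Ropp. lra.
Qed.

Lemma forcing_diff_dominated x t : x <= smax ->
  (forall t, t < x -> Rabs (G t - prof p t) < Y t) -> t < x ->
  Rabs (exp ((2/p+2)*t) * forcing p lam eps (G t) t
        - (- exp ((2/p+2)*t) * exp ((2*p+1) * ln (prof p t))))
  <= dbarW p (alpha p) (bar_rate p) A (bar_coeff p lam eps Z) t.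
Proof.
  intros Hx Hin Ht. pose proof (alpha_pos p (proj1 Hp)). pose proof (alpha_le1 p Hp).
  eapply Rle_trans.
  - apply (forcing_difference_bound p lam eps Z t (G t) (Y t)); auto.
    + eapply Rle_trans; [|apply HZ]. apply exp_le_mono; lra.
    + apply barrier_below_prof; lra.
  - apply (barrier_supersolution p (alpha p) (bar_rate p) A _ (4*(2*p+1)) (2*(eps^2*Z + eps*Rabs lam)));
      try lra; try reflexivity.
    pose proof (Rabs_pos lam). pose proof Z_pos.
    assert (0 <= eps^2 * Z) by (apply Rmult_le_pos; [apply pow2_ge_0|lra]).
    assert (0 <= eps * Rabs lam) by (apply Rmult_le_pos; lra). lra.
Qed.

(* Hence, comparing the fluxes from [-oo] (where the flux of [u] vanishes),
   [|u'| <= Y'] as long as [u] stays inside the barrier. *)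
Lemma diff_deriv_bound x : x <= smax -> (forall t, t < x -> Rabs (G t - prof p t) < Y t) ->
  forall s, s <= x -> Rabs (dG s - dprof p s) <= dY s.
Proof.
  intros Hx Hin s Hs. pose proof (alpha_pos p (proj1 Hp)) as Hal.
  set (W := barW p (alpha p) (bar_rate p) A (bar_coeff p lam eps Z)).
  set (Vu := fun t => exp (2/p*t) * dG t - prof_flux p t).
  assert (HW : Rabs (Vu s) <= W s).
  { apply Rle_plus_epsilon. intros eta Heta.
    destruct (diff_flux_to_0 eta Heta) as [s1 Hs1].
    set (sig := Rmin s1 (s-1)). assert (Hsig1 : sig <= s1) by apply Rmin_l.
    assert (Hsig2 : sig <= s - 1) by apply Rmin_r.
    assert (Hinc : Rabs (Vu s - Vu sig) <= W s - W sig).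
    { apply (increment_comparison Vu (fun t => exp ((2/p+2)*t) * forcing p lam eps (G t) t
         - (- exp ((2/p+2)*t) * exp ((2*p+1) * ln (prof p t)))) W
         (dbarW p (alpha p) (bar_rate p) A (bar_coeff p lam eps Z))).
      - lra.
      - intros t _. apply (is_derive_minus (fun s => exp (2/p*s) * dG s) (prof_flux p)). auto.
        apply prof_flux_deriv; lra.
      - intros t _. apply barW_deriv; lra.
      - intros t Ht. apply (forcing_diff_dominated x); auto. lra. }
    assert (HWs : 0 <= W sig).
    { unfold W, barW. apply Rmult_le_pos. left; apply exp_pos.
      apply (dbarY_range _ _ _ _ Z sig); try lra.
      apply bar_rate_nonneg; lra. apply bar_coeff_nonneg; pose proof Z_pos; lra.
      apply exp_double_le_Z; lra. }
    specialize (Hs1 sig Hsig1). fold (Vu sig) in Hs1.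
    pose proof (Rabs_triang_inv (Vu s) (Vu sig)). lra. }
  unfold Vu, prof_flux, W, barW in HW. fold (dY s) in HW.
  rewrite <- Rmult_minus_distr_l, Rabs_mult, Rabs_pos_eq in HW by (left; apply exp_pos).
  apply Rmult_le_reg_l with (exp (2/p*s)). apply exp_pos. auto.
Qed.

Lemma diff_in_barrier s : s <= smax -> Rabs (G s - prof p s) < Y s.
Proof.
  pose proof (alpha_pos p (proj1 Hp)) as Hal.
  set (u := fun t => G t - prof p t).
  assert (Hu' : forall t, is_derive u t (dG t - dprof p t)).
  { intros t. apply (is_derive_minus G (prof p)). auto. apply prof_deriv; lra. }
  assert (Hek : 0 < exp (- bar_rate p) * A / 2).
  { pose proof (exp_pos (- bar_rate p)). apply Rdiv_lt_0_compat; nra. }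
  destruct (diff_to_0 _ Hek) as [s0 Hs0].
  revert s. apply (continuous_induction (fun t => Rabs (u t) < Y t) smax).
  - exists s0. intros t Ht. specialize (Hs0 t ltac:(lra)). pose proof (barrier_lower t). unfold u. lra.
  - intros x Hx Hbelow.
    set (sig := Rmin s0 (x-1)). assert (Hsig1 : sig <= s0) by apply Rmin_l.
    assert (Hsig2 : sig <= x - 1) by apply Rmin_r.
    assert (Hinc : Rabs (u x - u sig) <= Y x - Y sig).
    { apply (increment_comparison u (fun t => dG t - dprof p t) Y dY).
      - lra.
      - intros t _. apply Hu'.
      - intros t _. apply barY_deriv; lra.
      - intros t Ht. apply (diff_deriv_bound x); auto; lra. }
    specialize (Hs0 sig Hsig1). pose proof (barrier_lower sig).
    pose proof (Rabs_triang_inv (u x) (u sig)). unfold u in *. lra.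
  - intros x Hx Px.
    set (d0 := Y x - Rabs (u x)).
    assert (Hd0 : 0 < d0) by (unfold d0; lra).
    destruct (is_derive_continuous_eps u x _ (Hu' x) (d0/2)) as [d1 [Hd1 Hc1]]. lra.
    destruct (is_derive_continuous_eps Y x _ (barY_deriv _ (bar_rate p) A (bar_coeff p lam eps Z) x Hal) (d0/2))
      as [d2 [Hd2 Hc2]]. lra.
    exists (Rmin d1 d2). split. apply Rmin_pos; auto.
    intros t Ht. pose proof (Rmin_l d1 d2). pose proof (Rmin_r d1 d2).
    specialize (Hc1 t ltac:(rewrite Rabs_pos_eq; lra)).
    specialize (Hc2 t ltac:(rewrite Rabs_pos_eq; lra)).
    apply Rabs_def2 in Hc2.
    pose proof (Rabs_triang_inv (u t) (u x)). unfold d0 in *. lra.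
Qed.

Lemma comparison_estimate s : s <= smax ->
  Rabs (G s - prof p s) <= A + bar_coeff p lam eps Z * Z /\
  Rabs (dG s - dprof p s)
    <= bar_rate p * (A + bar_coeff p lam eps Z * Z) + 2 * bar_coeff p lam eps Z * Z.
Proof.
  intros Hs. pose proof (alpha_pos p (proj1 Hp)) as Hal.
  pose proof (bar_rate_nonneg p (proj1 Hp)). pose proof Z_pos.
  pose proof (bar_coeff_nonneg p lam eps Z ltac:(lra) ltac:(lra)).
  split.
  - left. eapply Rlt_le_trans. apply diff_in_barrier; auto.
    apply barY_upper; try lra. apply exp_double_le_Z; auto.
  - eapply Rle_trans. apply (diff_deriv_bound s Hs). intros t Ht. apply diff_in_barrier; lra. lra.
    apply (dbarY_range _ _ _ _ Z s); try lra. apply exp_double_le_Z; auto.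
Qed.

End Comparison.

(** * Back to [Psi_b] and choice of the parameters *)

Lemma Psi_deriv p f x : 0 < p -> ex_derive f (exp x) ->
  is_derive (Psi p f) x (/p * exp (x/p) * f (exp x) + exp (x/p) * (exp x * Derive f (exp x))).
Proof.
  intros Hp [df Hdf]. unfold Psi. auto_derive. exists df; exact Hdf.
  change (Derive (fun x0 : R => f x0) (exp x)) with (Derive f (exp x)).
  match goal with |- ?a = ?b => change (@eq R a b) end. unfold Rdiv. ring.
Qed.

Lemma shifted_errors p lam b f t : 0 < p -> 0 < b -> is_classical_sol p lam b f ->
  Psi p f (t - p * ln b) - Theta_h p t = exp (t/p) * (rescaled p b f t - prof p t) /\
  Derive (Psi p f) (t - p * ln b) - Derive (Theta_h p) t
    = exp (t/p) * (/p * (rescaled p b f t - prof p t) + (drescaled p b f t - dprof p t)).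
Proof.
  intros Hp Hb Hsol.
  assert (Hexp1 : exp ((t - p * ln b)/p) = exp (t/p) / b).
  { replace ((t - p * ln b)/p) with (t/p + - ln b) by (field; lra).
    rewrite exp_plus, exp_Ropp, exp_ln by auto. reflexivity. }
  assert (Hexp2 : exp (t - p * ln b) = exp (-p * ln b) * exp t).
  { replace (t - p * ln b) with (-p * ln b + t) by ring. apply exp_plus. }
  assert (Hex : ex_derive f (exp (t - p * ln b))) by apply (proj1 Hsol _ (exp_pos _)).
  rewrite (is_derive_unique _ _ _ (Psi_deriv p f _ Hp Hex)).
  rewrite (is_derive_unique _ _ _ (Theta_deriv p t Hp)).
  unfold Psi. rewrite Theta_prof, Hexp1, Hexp2. unfold rescaled, drescaled.
  split; field; lra.
Qed.

(* Size of the barrier relative to [A = b^(-2p(1-a))], with [L = ln b]: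
   [A + B Z <= K A]. *)
Definition err_const (p lam T : R) : R :=
  1 + exp (bar_rate p) * (exp (4*T) + Rabs lam * exp (2*T)) / 2.

Lemma err_const_ge1 p lam T : 1 <= err_const p lam T.
Proof.
  unfold err_const. pose proof (exp_pos (bar_rate p)). pose proof (exp_pos (4*T)).
  pose proof (exp_pos (2*T)). pose proof (Rabs_pos lam).
  assert (0 <= Rabs lam * exp (2*T)) by (apply Rmult_le_pos; lra).
  assert (0 <= exp (bar_rate p) * (exp (4 * T) + Rabs lam * exp (2 * T))) by (apply Rmult_le_pos; lra).
  lra.
Qed.

Lemma barrier_size p lam T a L : 0 < p -> a < 1 -> 0 <= L ->
  exp (-2*p*(1-a)*L)
  + bar_coeff p lam (exp (-2*p*L)) (exp (2*(T + a*p*L))) * exp (2*(T + a*p*L))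
  <= err_const p lam T * exp (-2*p*(1-a)*L).
Proof.
  intros Hp Ha HL.
  set (E1 := exp (-2*p*(1-a)*L)). set (eps := exp (-2*p*L)). set (Z := exp (2*(T + a*p*L))).
  assert (HE1 : E1 <= 1).
  { apply exp_le1. assert (0 <= p*(1-a)*L) by (apply Rmult_le_pos; [apply Rmult_le_pos|]; lra). lra. }
  pose proof (exp_pos (-2*p*(1-a)*L)). fold E1 in H.
  assert (HX : eps * Z = exp (2*T) * E1).
  { unfold eps, Z, E1. rewrite <- !exp_plus. f_equal. ring. }
  assert (HBZ : bar_coeff p lam eps Z * Z
                = exp (bar_rate p) * ((eps*Z)^2 + Rabs lam * (eps * Z)) / 2).
  { unfold bar_coeff. field. }
  rewrite HBZ, HX. unfold err_const.
  assert (e4 : exp (4*T) = exp (2*T) ^ 2) by (rewrite <- exp_double; f_equal; ring).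
  rewrite e4. pose proof (exp_pos (2*T)). pose proof (exp_pos (bar_rate p)). pose proof (Rabs_pos lam).
  set (x := exp (2*T)) in *.
  assert ((x * E1)^2 <= x^2 * E1).
  { replace ((x*E1)^2) with (x^2 * (E1 * E1)) by ring. apply Rmult_le_compat_l. apply pow2_ge_0. nra. }
  assert (exp (bar_rate p) * ((x * E1) ^ 2 + Rabs lam * (x * E1))
          <= exp (bar_rate p) * ((x ^ 2 + Rabs lam * x) * E1)).
  { apply Rmult_le_compat_l. lra. nra. }
  nra.
Qed.

(* The decay rate [2p(1-a) - 2a > 0] of [K b^(-2p(1-a)) / q(T + a p L)],
   and the size of [L = ln b] beyond which this ratio is below 1. *)
Definition gap_exponent (p a : R) : R := 2*p - 2*a*(1+p).

Definition log_threshold (p lam T a : R) : R :=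
  ln (err_const p lam T / prof p T + 1) / gap_exponent p a.

Lemma gap_exponent_pos p a : 0 < p -> a < p / (1 + p) -> 0 < gap_exponent p a.
Proof.
  intros Hp ha1. unfold gap_exponent. assert (a * (1+p) < p).
  { apply Rmult_lt_reg_r with (/(1+p)). apply Rinv_0_lt_compat; lra.
    replace (a * (1 + p) * / (1 + p)) with a by (field; lra). exact ha1. }
  lra.
Qed.

Lemma log_threshold_pos p lam T a : 0 < p -> a < p / (1 + p) -> 0 < log_threshold p lam T a.
Proof.
  intros Hp ha1. unfold log_threshold.
  pose proof (gap_exponent_pos p a Hp ha1). pose proof (err_const_ge1 p lam T).
  assert (0 < prof p T) by apply exp_pos.
  apply Rdiv_lt_0_compat; auto. rewrite <- ln_1. apply ln_increasing. lra.
  assert (0 < err_const p lam T / prof p T) by (apply Rdiv_lt_0_compat; lra). lra.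
Qed.

Lemma prof_shift_lower p T a L : 0 < p -> 0 <= a -> 0 <= L ->
  prof p T * exp (-2*a*L) <= prof p (T + a*p*L).
Proof.
  intros Hp Ha HL. pose proof (alpha_pos p Hp) as Hal.
  set (P := exp (2*a*p*L)).
  assert (HP : 1 <= P) by (apply exp_ge1; assert (0 <= a * p * L) by (apply Rmult_le_pos; nra); lra).
  assert (HZP : exp (2*(T + a*p*L)) = exp (2*T) * P) by (unfold P; rewrite <- exp_plus; f_equal; ring).
  assert (Hln : ln (1 + alpha p * exp (2*(T + a*p*L))) <= ln (1 + alpha p * exp (2*T)) + 2*a*p*L).
  { rewrite <- (ln_exp (2*a*p*L)). fold P. rewrite <- ln_mult.
    - apply ln_le. pose proof (exp_pos (2*(T + a*p*L))). nra.
      rewrite HZP. pose proof (exp_pos (2*T)). nra.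
    - pose proof (exp_pos (2*T)); nra.
    - lra. }
  unfold prof. rewrite <- exp_plus. apply exp_le_mono.
  assert (0 < 1/p) by (apply Rdiv_lt_0_compat; lra).
  replace (-2*a*L) with (-(1/p) * (2*a*p*L)) by (field; lra). nra.
Qed.

(* For [L = ln b] large the barrier fits strictly below the profile on
   [(-oo, T + a p L]]; this is where [a < p/(1+p)] is used:
   [K b^(-2p(1-a))] decays faster than [q(T + a p L) >= q(T) b^(-2a)]. *)
Lemma gap_condition p lam T a L : 0 < p -> 0 < a -> a < p / (1 + p) ->
  log_threshold p lam T a <= L ->
  err_const p lam T * exp (-2*p*(1-a)*L) < prof p (T + a*p*L).
Proof.
  intros Hp ha0 ha1 HL.
  pose proof (gap_exponent_pos p a Hp ha1) as Hgam. set (gam := gap_exponent p a) in *.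
  pose proof (log_threshold_pos p lam T a Hp ha1).
  set (K := err_const p lam T). set (K3 := prof p T).
  assert (HK : 1 <= K) by apply err_const_ge1. assert (HK3 : 0 < K3) by apply exp_pos.
  assert (HKK : 0 < K / K3 + 1) by (assert (0 < K/K3) by (apply Rdiv_lt_0_compat; lra); lra).
  eapply Rlt_le_trans; [| apply prof_shift_lower; lra]. fold K3.
  assert (HE1 : exp (-2*p*(1-a)*L) = exp (-2*a*L) * / exp (gam * L)).
  { rewrite <- exp_Ropp, <- exp_plus. unfold gam, gap_exponent. f_equal. ring. }
  assert (Hg : K/K3 + 1 <= exp (gam * L)).
  { rewrite <- (exp_ln (K/K3+1)) by auto. apply exp_le_mono.
    apply Rmult_le_reg_r with (/gam). apply Rinv_0_lt_compat; auto.
    replace (gam * L * / gam) with L by (field; lra). exact HL. }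
  rewrite HE1. pose proof (exp_pos (-2*a*L)). pose proof (exp_pos (gam * L)).
  assert (K < K3 * exp (gam * L)).
  { apply Rlt_le_trans with (K3 * (K/K3 + 1)).
    - replace (K3 * (K/K3+1)) with (K + K3) by (field; lra). lra.
    - apply Rmult_le_compat_l; lra. }
  replace (K * (exp (-2 * a * L) * / exp (gam * L))) with (exp (-2 * a * L) * (K / exp (gam * L)))
    by (field; lra).
  rewrite (Rmult_comm K3). apply Rmult_lt_compat_l; auto.
  apply Rmult_lt_reg_r with (exp (gam * L)); auto.
  unfold Rdiv. rewrite Rmult_assoc, Rinv_l by lra. lra.
Qed.

Lemma rescaled_estimate p lam b f A Z smax : 0 < p <= 1 -> 0 < b ->
  is_classical_sol p lam b f -> exp (-2*p*ln b) <= 1 -> 0 < A -> exp (2*smax) <= Z ->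
  A + bar_coeff p lam (exp (-2*p*ln b)) Z * Z < exp (-(1/p) * ln (1 + alpha p * Z)) ->
  forall s, s <= smax ->
  Rabs (rescaled p b f s - prof p s) <= A + bar_coeff p lam (exp (-2*p*ln b)) Z * Z /\
  Rabs (drescaled p b f s - dprof p s)
    <= bar_rate p * (A + bar_coeff p lam (exp (-2*p*ln b)) Z * Z)
       + 2 * bar_coeff p lam (exp (-2*p*ln b)) Z * Z.
Proof.
  intros Hp Hb Hsol He1 HA HZ Hgap.
  assert (Heps : 0 < exp (-2*p*ln b) <= 1) by (split; [apply exp_pos | exact He1]).
  pose proof (fun s => rescaled_deriv p lam b f s Hb Hsol) as HG.
  pose proof (fun s => rescaled_flux_deriv p lam b f s (proj1 Hp) Hb Hsol) as HV.
  pose proof (rescaled_to_1 p lam b f Hb Hsol) as HG1.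
  apply (comparison_estimate p lam _ A Z smax _ _ Hp Heps HA HZ Hgap HG HV HG1).
  exact (rescaled_flux_to_0 p lam _ _ _ Hp Heps HG HV HG1).
Qed.

Lemma error_bounds p k K A BZ u du : 0 < p -> 0 <= k -> 0 <= A -> 0 <= BZ -> A + BZ <= K * A ->
  Rabs u <= A + BZ -> Rabs du <= k * (A + BZ) + 2 * BZ ->
  Rabs u <= K * (1 + /p + k + 2) * A /\ Rabs (/p * u + du) <= K * (1 + /p + k + 2) * A.
Proof.
  intros Hp Hk HA HBZ HK Hu Hdu.
  assert (Hip : 0 < /p) by (apply Rinv_0_lt_compat; lra).
  assert (0 <= K * A * (/p + k + 2)) by (apply Rmult_le_pos; nra).
  split; [nra |].
  eapply Rle_trans. apply Rabs_triang. rewrite Rabs_mult, (Rabs_pos_eq (/p)) by lra.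
  assert (/ p * Rabs u <= /p * (K * A)) by (apply Rmult_le_compat_l; lra).
  assert (k * (A + BZ) <= k * (K * A)) by (apply Rmult_le_compat_l; lra).
  nra.
Qed.

Theorem mainTheorem3 (p lam : R) (hp0 : 0 < p) (hp1 : p <= 1)
  (T a : R) (hT : 0 < T) (ha0 : 0 < a) (ha1 : a < p / (1 + p)) :
  exists bTa CTa : R, 0 < bTa /\ 0 < CTa /\
    forall (b : R) (f : R -> R), bTa <= b -> is_classical_sol p lam b f ->
      forall t : R, t <= T + a * p * ln b ->
        Rabs (Psi p f (t - p * ln b) - Theta_h p t)
          <= CTa * Rpower b (- 2 * p * (1 - a)) * exp (t / p) /\
        Rabs (Derive (Psi p f) (t - p * ln b) - Derive (Theta_h p) t)
          <= CTa * Rpower b (- 2 * p * (1 - a)) * exp (t / p).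
Proof.
  set (K := err_const p lam T). set (k := bar_rate p).
  assert (Ha1 : a < 1).
  { assert (p / (1 + p) < 1) by (apply Rmult_lt_reg_r with (1+p); [lra|]; unfold Rdiv;
      rewrite Rmult_assoc, Rinv_l; lra). lra. }
  pose proof (log_threshold_pos p lam T a hp0 ha1).
  assert (Hip : 0 < /p) by (apply Rinv_0_lt_compat; lra).
  exists (exp (log_threshold p lam T a)), (K * (1 + /p + k + 2)).
  split; [apply exp_pos | split].
  { assert (HK : 1 <= K) by apply err_const_ge1.
    assert (Hk : 0 <= k) by (apply bar_rate_nonneg; lra).
    apply Rmult_lt_0_compat; lra. }
  intros b f Hb Hsol t Ht.
  assert (Hb0 : 0 < b) by (eapply Rlt_le_trans; [apply exp_pos | exact Hb]).
  assert (HL : log_threshold p lam T a <= ln b).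
  { rewrite <- (ln_exp (log_threshold p lam T a)). apply ln_le; auto. apply exp_pos. }
  set (Z := exp (2*(T + a*p*ln b))). set (E1 := exp (-2*p*(1-a)*ln b)).
  pose proof (barrier_size p lam T a (ln b) hp0 Ha1 ltac:(lra)) as HAB. fold Z E1 K in HAB.
  destruct (rescaled_estimate p lam b f E1 Z (T + a*p*ln b) (conj hp0 hp1) Hb0 Hsol
              ltac:(apply exp_le1; nra) (exp_pos _) (Rle_refl _)
              ltac:(eapply Rle_lt_trans; [exact HAB | apply gap_condition; auto]) t Ht)
    as [Hu Hdu].
  rewrite (Rmult_assoc 2) in Hdu.
  assert (HBZ : 0 <= bar_coeff p lam (exp (-2*p*ln b)) Z * Z).
  { apply Rmult_le_pos; [apply bar_coeff_nonneg |]; left; apply exp_pos. }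
  destruct (error_bounds p k K E1 _ _ _ hp0 (bar_rate_nonneg p hp0) (Rlt_le _ _ (exp_pos _))
              HBZ HAB Hu Hdu) as [Hu' Hdu'].
  destruct (shifted_errors p lam b f t hp0 Hb0 Hsol) as [-> ->].
  replace (Rpower b (-2 * p * (1 - a))) with E1 by (unfold Rpower, E1; f_equal; ring).
  rewrite !Rabs_mult, (Rabs_pos_eq (exp (t/p))) by (left; apply exp_pos).
  rewrite !(Rmult_comm (exp (t/p))).
  split; apply Rmult_le_compat_r; auto; left; apply exp_pos.
Qed.
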